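(* Let $\Sigma_A,\Sigma_B,\Sigma$ be finite nonempty sets and $(X_A,X_B,Y)$ random variables with values in $\Sigma_A\times\Sigma_B\times\Sigma$, all marginal probabilities positive, with $X_A,X_B$ independent conditional on $Y$. Let $PS:\Sigma_B\times\Delta_{\Sigma_B}\to\mathbb{R}$ be a proper scoring rule. For $h_A:\Sigma_A\to\Delta_\Sigma$ and $v_B:\Sigma_B\to[0,1]^\Sigma$ with $\sum_{x_B\in\Sigma_B}v_B(x_B)=(1,\dots,1)$, define the expected $PS$-gain $$G_{PS}(h_A,v_B):=\sum_{x_A,x_B}\Pr[X_A=x_A,X_B=x_B]\,PS\Big(x_B,\big(v_B(x_B')\cdot h_A(x_A)\big)_{x_B'\in\Sigma_B}\Big).$$ Then $v_B^*(x_B)=(\Pr[X_B=x_B\mid Y=y])_{y\in\Sigma}$, $h_A^*(x_A)=(\Pr[Y=y\mid X_A=x_A])_{y\in\Sigma}$ is a maximizer of $G_{PS}$ over all such pairs $(h_A,v_B)$.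
   Context: $\Delta_S$ denotes the set of probability vectors on a finite set $S$; $\cdot$ is the dot product in $\mathbb{R}^\Sigma$. A scoring rule $PS:\Sigma_B\times\Delta_{\Sigma_B}\to\mathbb{R}$ is proper if for all $\mathbf{p},\mathbf{q}\in\Delta_{\Sigma_B}$, $\sum_{\sigma}\mathbf{p}(\sigma)PS(\sigma,\mathbf{q})\le\sum_\sigma\mathbf{p}(\sigma)PS(\sigma,\mathbf{p})$. The constraint on $v_B$ ensures $(v_B(x_B')\cdot h_A(x_A))_{x_B'}\in\Delta_{\Sigma_B}$. *)

From HB Require Import structures.
From mathcomp Require Import all_boot all_order all_algebra.
Set Implicit Arguments. Unset Strict Implicit. Unset Printing Implicit Defensive.
Import Order.TTheory GRing.Theory Num.Theory.
Local Open Scope ring_scope.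

Definition is_prob (R : numDomainType) (T : finType) (p : {ffun T -> R}) : Prop :=
  (forall t, 0 <= p t) /\ \sum_(t : T) p t = 1.

(* A joint distribution P(a,b,y) = Pr[X_A=a, X_B=b, Y=y]. *)
Definition is_joint (R : numDomainType) (SA SB S : finType)
  (P : SA -> SB -> S -> R) : Prop :=
  (forall a b y, 0 <= P a b y) /\ \sum_(a : SA) \sum_(b : SB) \sum_(y : S) P a b y = 1.

Section Marginals.
Variables (R : numDomainType) (SA SB S : finType) (P : SA -> SB -> S -> R).
Definition PrA (a : SA) : R := \sum_(b : SB) \sum_(y : S) P a b y.
Definition PrB (b : SB) : R := \sum_(a : SA) \sum_(y : S) P a b y.
Definition PrY (y : S) : R := \sum_(a : SA) \sum_(b : SB) P a b y.
Definition PrAY (a : SA) (y : S) : R := \sum_(b : SB) P a b y.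
Definition PrBY (b : SB) (y : S) : R := \sum_(a : SA) P a b y.
Definition PrAB (a : SA) (b : SB) : R := \sum_(y : S) P a b y.

(* X_A and X_B independent conditional on Y:
   Pr[a,b | y] = Pr[a | y] Pr[b | y], written multiplicatively. *)
Definition cond_indep : Prop :=
  forall a b y, P a b y * PrY y = PrAY a y * PrBY b y.

Definition vB_star (b : SB) : {ffun S -> R} := [ffun y => PrBY b y / PrY y].
Definition hA_star (a : SA) : {ffun S -> R} := [ffun y => PrAY a y / PrA a].
End Marginals.

(* Proper scoring rule PS : Sigma_B x Delta_{Sigma_B} -> R (PS is given on all
   of {ffun SB -> R}, but properness only concerns the simplex). *)
Definition proper_scoring (R : numDomainType) (SB : finType)
  (PS : SB -> {ffun SB -> R} -> R) : Prop :=
  forall p q : {ffun SB -> R}, is_prob p -> is_prob q ->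
    \sum_(s : SB) p s * PS s q <= \sum_(s : SB) p s * PS s p.

Definition admissible_hA (R : numDomainType) (SA S : finType)
  (h : SA -> {ffun S -> R}) : Prop := forall a, is_prob (h a).

Definition admissible_vB (R : numDomainType) (SB S : finType)
  (v : SB -> {ffun S -> R}) : Prop :=
  (forall b y, 0 <= v b y <= 1) /\ (forall y, \sum_(b : SB) v b y = 1).

Definition pred_B (R : numDomainType) (SB S : finType)
  (v : SB -> {ffun S -> R}) (ha : {ffun S -> R}) : {ffun SB -> R} :=
  [ffun b' => \sum_(y : S) v b' y * ha y].

Definition gain (R : numDomainType) (SA SB S : finType)
  (P : SA -> SB -> S -> R) (PS : SB -> {ffun SB -> R} -> R)
  (h : SA -> {ffun S -> R}) (v : SB -> {ffun S -> R}) : R :=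
  \sum_(a : SA) \sum_(b : SB) PrAB P a b * PS b (pred_B v (h a)).

From HB Require Import structures.
From mathcomp Require Import all_boot all_order all_algebra.
Import Order.TTheory GRing.Theory Num.Theory.
Local Open Scope ring_scope.

(* Writing [Pr[X_A = a, X_B = b] = Pr[X_A = a] Pr[X_B = b | X_A = a]] splits the
   gain into a [Pr[X_A = a]]-weighted sum of expected scores of the prediction
   [pred_B v (h a)] against the true conditional law of [X_B] given [X_A = a].
   Every admissible pair predicts some distribution on [Sigma_B], so properness
   bounds each summand by the score of the true conditional law; and conditional
   independence makes the pair [(hA_star, vB_star)] predict exactly that law. *)

Lemma is_prob_normalize (R : numFieldType) (T : finType) (w : T -> R) :
  (forall t, 0 <= w t) -> 0 < \sum_t w t ->
  is_prob [ffun t => w t / \sum_s w s].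
Proof.
move=> w_ge0 sum_gt0; split=> [t|]; first by rewrite ffunE divr_ge0 // ltW.
under eq_bigr do rewrite ffunE.
by rewrite -mulr_suml divff // gt_eqF.
Qed.

Lemma is_prob_pred_B (R : numDomainType) (SB S : finType)
    (v : SB -> {ffun S -> R}) (ha : {ffun S -> R}) :
  admissible_vB v -> is_prob ha -> is_prob (pred_B v ha).
Proof.
move=> [v_bounded v_sum1] [ha_ge0 ha_sum1]; split=> [b|].
  rewrite ffunE; apply: sumr_ge0 => y _.
  by rewrite mulr_ge0 //; case/andP: (v_bounded b y).
under eq_bigr do rewrite ffunE.
rewrite exchange_big /=.
by under eq_bigr do rewrite -mulr_suml v_sum1 mul1r.
Qed.

Section OptimalPair.
Variables (R : numFieldType) (SA SB S : finType) (P : SA -> SB -> S -> R).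
Hypothesis P_ge0 : forall a b y, 0 <= P a b y.
Hypothesis PrA_gt0 : forall a, 0 < PrA P a.
Hypothesis PrY_gt0 : forall y, 0 < PrY P y.

Lemma PrA_sumAY a : PrA P a = \sum_y PrAY P a y.
Proof. by rewrite /PrA /PrAY exchange_big. Qed.

Lemma PrY_sumBY y : PrY P y = \sum_b PrBY P b y.
Proof. by rewrite /PrY /PrBY exchange_big. Qed.

Lemma PrBY_ge0 b y : 0 <= PrBY P b y.
Proof. by apply: sumr_ge0 => a _. Qed.

Lemma admissible_hA_star : admissible_hA (hA_star P).
Proof.
move=> a; have -> : hA_star P a = [ffun y => PrAY P a y / \sum_z PrAY P a z].
  by apply/ffunP => y; rewrite !ffunE PrA_sumAY.
apply: is_prob_normalize => [y|]; first by apply: sumr_ge0 => b _.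
by rewrite -PrA_sumAY.
Qed.

Lemma admissible_vB_star : admissible_vB (vB_star P).
Proof.
split=> [b y|y].
  rewrite ffunE divr_ge0 ?PrBY_ge0 ?(ltW (PrY_gt0 y)) //=.
  rewrite ler_pdivrMr // mul1r PrY_sumBY (bigD1 b) //= lerDl.
  by apply: sumr_ge0 => b' _; apply: PrBY_ge0.
under eq_bigr do rewrite ffunE.
by rewrite -mulr_suml -PrY_sumBY divff // gt_eqF.
Qed.

Definition PrB_givenA (a : SA) : {ffun SB -> R} := [ffun b => PrAB P a b / PrA P a].

Lemma is_prob_PrB_givenA a : is_prob (PrB_givenA a).
Proof.
apply: (@is_prob_normalize _ _ (PrAB P a)) => [b|]; last exact: PrA_gt0.
by apply: sumr_ge0 => y _.
Qed.

Lemma gain_PrB_givenA PS h v : gain P PS h v =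
  \sum_a PrA P a * \sum_b PrB_givenA a b * PS b (pred_B v (h a)).
Proof.
apply: eq_bigr => a _; rewrite mulr_sumr; apply: eq_bigr => b _.
by rewrite ffunE mulrA mulrCA divff ?mulr1 // gt_eqF.
Qed.

Hypothesis P_cond_indep : cond_indep P.

Lemma pred_B_star a : pred_B (vB_star P) (hA_star P a) = PrB_givenA a.
Proof.
apply/ffunP => b; rewrite !ffunE /PrAB mulr_suml; apply: eq_bigr => y _.
have -> : P a b y = PrBY P b y / PrY P y * PrAY P a y.
  by rewrite mulrAC [PrBY _ _ _ * _]mulrC -P_cond_indep mulfK // gt_eqF.
by rewrite !ffunE mulrA.
Qed.

Lemma gain_le_gain_star PS h v :
  proper_scoring PS -> admissible_hA h -> admissible_vB v ->
  gain P PS h v <= gain P PS (hA_star P) (vB_star P).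
Proof.
move=> PS_proper h_adm v_adm; rewrite !gain_PrB_givenA.
apply: ler_sum => a _; rewrite ler_pM2l ?PrA_gt0 // pred_B_star.
apply: PS_proper; [exact: is_prob_PrB_givenA | exact: is_prob_pred_B].
Qed.

End OptimalPair.

Theorem mainTheorem8 (R : realFieldType) (SA SB S : finType)
  (a0 : SA) (b0 : SB) (y0 : S)
  (P : SA -> SB -> S -> R)
  (HP : is_joint P)
  (HA : forall a, 0 < PrA P a) (HB : forall b, 0 < PrB P b) (HY : forall y, 0 < PrY P y)
  (HCI : cond_indep P)
  (PS : SB -> {ffun SB -> R} -> R) (HPS : proper_scoring PS) :
  admissible_hA (hA_star P) /\ admissible_vB (vB_star P) /\
  forall (h : SA -> {ffun S -> R}) (v : SB -> {ffun S -> R}),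
    admissible_hA h -> admissible_vB v ->
    gain P PS h v <= gain P PS (hA_star P) (vB_star P).
Proof.
have [P_ge0 _] := HP.
split; first exact: admissible_hA_star.
split; first exact: admissible_vB_star.
by move=> h v; apply: gain_le_gain_star.
Qed.
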